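(* Let $n_0>0$, $\alpha>0$, $P>0$. For each $T>0$ and integer $k\ge1$ let $\omega_k(T)>0$ be the unique positive solution of $2\arctan(\omega_k/\alpha)=k\pi-\omega_k T$, set $\lambda_k(T)=\frac{2\alpha P}{\alpha^2+\omega_k(T)^2}$ (the Mercer eigenvalues on $[0,T]$ of the kernel $Pe^{-\alpha|t_1-t_2|}$), and define $$I(T)=\frac12\sum_{k=1}^{\infty}\log\left(1+\frac{\lambda_k(T)}{n_0/2}\right).$$ Then the instantaneous finite-time rate at the origin satisfies $$C(0^+)=\frac{\partial I(T)}{\partial T}\Big|_{T=0^+}=\frac{P}{n_0}.$$
   Context: Setting: the transmitted signal is a zero-mean stationary Gaussian process with autocorrelation $Pe^{-\alpha|\tau|}$ observed on $[0,T]$ in additive white Gaussian noise of power spectral density $n_0/2$; $I(T)$ is the finite-time mutual information and $C(T)=I(T)/T$ the finite-time rate, with $C(0^+)$ its limit as $T\to0^+$, equal to the right derivative of $I$ at $T=0$ (where $I(0)=0$). Logarithms are natural. *)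

From Stdlib Require Import Reals.
From Coquelicot Require Import Coquelicot.
Open Scope R_scope.

Definition omega_spec (alpha : R) (omega : nat -> R -> R) : Prop :=
  forall (T : R) (k : nat), 0 < T -> (1 <= k)%nat ->
    0 < omega k T /\
    2 * atan (omega k T / alpha) = INR k * PI - omega k T * T.

Definition lambda (alpha P : R) (omega : nat -> R -> R) (k : nat) (T : R) : R :=
  2 * alpha * P / (alpha ^ 2 + (omega k T) ^ 2).

Definition I_term (n0 alpha P : R) (omega : nat -> R -> R) (T : R) (k : nat) : R :=
  / 2 * ln (1 + lambda alpha P omega k T / (n0 / 2)).

(* I(T) = 1/2 sum_{k>=1} log(1 + lambda_k(T)/(n0/2)); index shifted so that
   the Coquelicot series index j = 0 corresponds to k = 1. *)
Definition mutual_info (n0 alpha P : R) (omega : nat -> R -> R) (T : R) : R :=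
  Series (fun j => I_term n0 alpha P omega T (S j)).

From Stdlib Require Import Reals Lra Psatz.
From Coquelicot Require Import Coquelicot.
Open Scope R_scope.

(* As T -> 0+ only the first eigenvalue matters.  For k = 1 the defining equation
   reads omega_1 T = 2 atan (alpha / omega_1), which pins T (alpha^2 + omega_1^2)
   to 2 alpha + O(T); since [1/2 ln (1 + x) = x/2 + O(x^2)], the first summand is
   P T / n0 + O(T^2).  For k >= 2, omega_k T > (k - 1) pi, so the k-th summand is
   O(T^2 / k^2) and the whole tail is O(T^2).  Hence I(T) = P T / n0 + O(T^2). *)

Lemma ln_le_sub_1 x : 0 < x -> ln x <= x - 1.
Proof.
  intros Hx. rewrite <- (ln_exp (x - 1)). apply ln_le; [exact Hx|].
  pose proof (exp_ineq1_le (x - 1)). lra.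
Qed.

Lemma ln_1p_bounds x : 0 <= x -> x / (1 + x) <= ln (1 + x) <= x.
Proof.
  intros Hx. split.
  - pose proof (ln_le_sub_1 (/ (1 + x))) as H.
    rewrite ln_Rinv in H by lra.
    assert (/ (1 + x) - 1 = - (x / (1 + x))) by (field; lra).
    assert (0 < / (1 + x)) by (apply Rinv_0_lt_compat; lra). lra.
  - pose proof (ln_le_sub_1 (1 + x)). lra.
Qed.

Lemma half_ln_1p_div_bounds b X : 0 < b -> 0 < X ->
  b / (2 * (X + b)) <= / 2 * ln (1 + b / X) <= b / (2 * X).
Proof.
  intros Hb HX.
  assert (Hx : 0 <= b / X) by (apply Rdiv_le_0_compat; lra).
  destruct (ln_1p_bounds _ Hx) as [Hlow Hup].
  replace (b / X / (1 + b / X)) with (b / (X + b)) in Hlow by (field; lra).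
  split.
  - replace (b / (2 * (X + b))) with (/ 2 * (b / (X + b))) by (field; lra). lra.
  - replace (b / (2 * X)) with (/ 2 * (b / X)) by (field; lra). lra.
Qed.

(* Mean value theorem, with [atan' x = 1 / (1 + x^2)] between [1 / (1 + u^2)] and [1] on [0, u]. *)
Lemma atan_bounds u : 0 <= u -> u / (1 + u ^ 2) <= atan u <= u.
Proof.
  intros Hu.
  destruct (MVT_gen atan 0 u (fun x => / (1 + x ^ 2))) as [c [Hc Hmvt]].
  - intros x _. apply is_derive_Reals, derivable_pt_lim_atan.
  - intros x _. apply derivable_continuous_pt.
    exists (/ (1 + x ^ 2)). apply derivable_pt_lim_atan.
  - rewrite Rmin_left, Rmax_right in Hc by lra.
    rewrite atan_0, !Rminus_0_r in Hmvt. rewrite Hmvt.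
    assert (Hdc : / (1 + u ^ 2) <= / (1 + c ^ 2) <= 1).
    { rewrite <- Rinv_1. split; apply Rinv_le_contravar; nra. }
    unfold Rdiv. split; nra.
Qed.

Lemma is_series_telescoping (u : nat -> R) :
  is_lim_seq u 0 -> is_series (fun n => u n - u (S n)) (u O).
Proof.
  intros Hu.
  enough (H : is_lim_seq (sum_n (fun k => u k - u (S k))) (u O)) by exact H.
  assert (Hsum : forall n, sum_n (fun k => u k - u (S k)) n = u O - u (S n)).
  { induction n as [|n IH].
    - apply sum_O.
    - rewrite sum_Sn, IH. change (u O - u (S n) + (u (S n) - u (S (S n))) = u O - u (S (S n))).
      ring. }
  apply (is_lim_seq_ext (fun n => u O - u (S n))); [intros n; now rewrite Hsum|].
  pose proof (is_lim_seq_minus' _ _ _ _ (is_lim_seq_const (u O))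
    (proj1 (is_lim_seq_incr_1 u 0) Hu)) as H.
  now rewrite Rminus_0_r in H.
Qed.

Lemma is_series_inv_consecutive :
  is_series (fun n => / (INR n + 1) - / (INR n + 2)) 1.
Proof.
  assert (Hlim : is_lim_seq (fun n => / (INR n + 1)) 0).
  { replace (Finite 0) with (Rbar_inv p_infty) by reflexivity.
    apply is_lim_seq_inv; [|discriminate].
    eapply is_lim_seq_plus; [apply is_lim_seq_INR|apply is_lim_seq_const|reflexivity]. }
  pose proof (is_series_telescoping _ Hlim) as H. cbv beta in H.
  rewrite INR_0, Rplus_0_l, Rinv_1 in H.
  refine (is_series_ext _ _ _ _ H). intros n.
  rewrite S_INR. now replace (INR n + 1 + 1) with (INR n + 2) by ring.
Qed.

Lemma filterlim_right_slope (g : R -> R) (a y0 l K : R) :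
  (forall x, a < x -> Rabs (g x - y0 - l * (x - a)) <= K * (x - a) ^ 2) ->
  filterlim (fun x => (g x - y0) / (x - a)) (at_right a) (locally l).
Proof.
  intros Hg. apply filterlim_locally. intros eps.
  assert (HK : 0 < Rabs K + 1) by (pose proof (Rabs_pos K); lra).
  exists (mkposreal _ (Rdiv_lt_0_compat _ _ (cond_pos eps) HK)).
  intros x Hx Hax. change (Rabs (x - a) < eps / (Rabs K + 1)) in Hx.
  change (Rabs ((g x - y0) / (x - a) - l) < eps).
  set (h := x - a) in *.
  assert (Hh : 0 < h) by (unfold h; lra).
  rewrite Rabs_pos_eq in Hx by lra.
  apply Rlt_div_r in Hx; [|lra].
  replace ((g x - y0) / h - l) with ((g x - y0 - l * h) / h) by (field; lra).
  rewrite Rabs_div, (Rabs_pos_eq h) by lra.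
  apply Rlt_div_l; [lra|].
  specialize (Hg x Hax). fold h in Hg.
  pose proof (Rle_abs K). nra.
Qed.

Section Eigenvalue_sums.

Variables (n0 alpha P : R) (omega : nat -> R -> R).
Hypotheses (Hn0 : 0 < n0) (Halpha : 0 < alpha) (HP : 0 < P)
  (Homega : omega_spec alpha omega).

Lemma omega_mul_gt T k : 0 < T -> (1 <= k)%nat -> (INR k - 1) * PI < omega k T * T.
Proof.
  intros HT Hk. destruct (Homega T k HT Hk) as [_ Heq].
  pose proof (atan_bound (omega k T / alpha)). lra.
Qed.

Lemma omega1_window T : 0 < T ->
  2 * alpha <= T * (alpha ^ 2 + omega 1%nat T ^ 2) <= 2 * alpha + alpha ^ 2 * T.
Proof.
  intros HT. destruct (Homega T 1%nat HT (le_n 1)) as [Hw Heq].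
  set (w := omega 1%nat T) in *. change (INR 1) with 1 in Heq.
  set (u := alpha / w).
  assert (Hu : 0 < u) by (apply Rdiv_lt_0_compat; lra).
  assert (Hcompl : atan u = PI / 2 - atan (w / alpha)).
  { unfold u. rewrite <- atan_inv by (apply Rdiv_lt_0_compat; lra).
    f_equal. field. lra. }
  destruct (atan_bounds u) as [Hlow Hup]; [lra|].
  apply Rle_div_l in Hlow; [|nra].
  replace (atan u) with (w * T / 2) in Hlow, Hup by lra.
  assert (Halpha_eq : alpha = u * w) by (unfold u; field; lra).
  rewrite Halpha_eq. split.
  - pose proof (Rmult_le_compat_l w _ _ (Rlt_le _ _ Hw) Hlow). nra.
  - pose proof (Rmult_le_compat_l w _ _ (Rlt_le _ _ Hw) Hup). nra.
Qed.

Lemma I_term_eq T k : I_term n0 alpha P omega T k =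
  / 2 * ln (1 + 4 * alpha * (P / n0) / (alpha ^ 2 + omega k T ^ 2)).
Proof.
  unfold I_term, lambda. do 3 f_equal. field. split; [lra|nra].
Qed.

Lemma first_I_term_bounds T : 0 < T ->
  P / n0 * T - P / n0 * (alpha + 4 * (P / n0)) / 2 * T ^ 2
    <= I_term n0 alpha P omega T 1%nat <= P / n0 * T.
Proof.
  intros HT. rewrite I_term_eq.
  destruct (omega1_window T HT) as [HX1 HX2].
  set (q := P / n0). set (X := alpha ^ 2 + omega 1%nat T ^ 2) in *.
  assert (Hq : 0 < q) by (apply Rdiv_lt_0_compat; lra).
  assert (HX : 0 < X) by (unfold X; nra).
  destruct (half_ln_1p_div_bounds (4 * alpha * q) X) as [Hlow Hup]; [nra|lra|].
  split.
  - eapply Rle_trans; [|exact Hlow]. apply Rle_div_r; [nra|].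
    set (s := alpha + 4 * q).
    assert (Hslack : 0 <= 2 * alpha + alpha ^ 2 * T - T * X) by lra.
    destruct (Rle_lt_dec (s * T) 2) as [Hsmall|Hlarge].
    + assert (0 <= q * (2 - s * T) * (2 * alpha + alpha ^ 2 * T - T * X)).
      { apply Rmult_le_pos; [apply Rmult_le_pos|]; lra. }
      assert (0 <= q * alpha * (s * T) ^ 2) by (apply Rmult_le_pos; nra).
      unfold s in *. lra.
    + assert (0 <= q * (s * T - 2) * (T * X + 4 * alpha * q * T)).
      { apply Rmult_le_pos; [apply Rmult_le_pos|]; nra. }
      unfold s in *. nra.
  - eapply Rle_trans; [exact Hup|]. apply Rle_div_l; nra.
Qed.

(* From [omega_mul_gt]: [omega (j+2) T * T > (j+1) PI >= 2 (j+1)], so the summand is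
   [O(T^2 / (j+1)^2)], dominated by a telescoping series. *)
Lemma tail_I_term_bounds T j : 0 < T ->
  0 <= I_term n0 alpha P omega T (S (S j))
    <= 4 * alpha * (P / n0) * T ^ 2 * (/ (INR j + 1) - / (INR j + 2)).
Proof.
  intros HT. rewrite I_term_eq.
  pose proof (omega_mul_gt T (S (S j)) HT ltac:(lia)) as HwT.
  rewrite !S_INR in HwT. pose proof PI2_1. pose proof (pos_INR j).
  set (q := P / n0). set (w := omega (S (S j)) T) in *.
  assert (Hq : 0 < q) by (apply Rdiv_lt_0_compat; lra).
  assert (HX : 0 < alpha ^ 2 + w ^ 2) by nra.
  destruct (half_ln_1p_div_bounds (4 * alpha * q) (alpha ^ 2 + w ^ 2)) as [Hlow Hup];
    [nra|lra|].
  split.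
  - eapply Rle_trans; [|exact Hlow]. apply Rdiv_le_0_compat; nra.
  - eapply Rle_trans; [exact Hup|].
    set (m := (INR j + 1) * (INR j + 2)).
    assert (Hm : 0 < m) by (unfold m; nra).
    assert (HmX : m <= 2 * (alpha ^ 2 + w ^ 2) * T ^ 2).
    { assert (Hk : 2 * (INR j + 1) <= w * T) by nra.
      assert (Hk2 : (2 * (INR j + 1)) ^ 2 <= (w * T) ^ 2) by (apply pow_incr; lra).
      unfold m. nra. }
    replace (4 * alpha * q * T ^ 2 * (/ (INR j + 1) - / (INR j + 2)))
      with (4 * alpha * q * T ^ 2 / m) by (unfold m; field; lra).
    apply Rle_div_l; [nra|].
    replace (4 * alpha * q * T ^ 2 / m * (2 * (alpha ^ 2 + w ^ 2)))
      with (4 * alpha * q * (2 * (alpha ^ 2 + w ^ 2) * T ^ 2) / m) by (field; lra).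
    apply (Rle_div_r _ _ m); [lra|]. apply Rmult_le_compat_l; nra.
Qed.

Lemma ex_series_tail_I_term T : 0 < T ->
  ex_series (fun j => I_term n0 alpha P omega T (S (S j))).
Proof.
  intros HT.
  apply (@ex_series_le R_AbsRing R_CompleteNormedModule) with
    (b := fun j => 4 * alpha * (P / n0) * T ^ 2 * (/ (INR j + 1) - / (INR j + 2))).
  - intros j. destruct (tail_I_term_bounds T j HT) as [H0 H1].
    change (Rabs (I_term n0 alpha P omega T (S (S j))) <=
      4 * alpha * (P / n0) * T ^ 2 * (/ (INR j + 1) - / (INR j + 2))).
    now rewrite Rabs_pos_eq.
  - apply (@ex_series_scal_l R_AbsRing R_NormedModule).
    exists 1. exact is_series_inv_consecutive.
Qed.

Lemma Series_tail_I_term_bounds T : 0 < T ->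
  0 <= Series (fun j => I_term n0 alpha P omega T (S (S j)))
    <= 4 * alpha * (P / n0) * T ^ 2.
Proof.
  intros HT. split.
  - rewrite <- (PSeries_const_0 1), PSeries_1.
    apply Series_le; [|now apply ex_series_tail_I_term].
    intros j. split; [lra|]. now apply tail_I_term_bounds.
  - rewrite <- (Rmult_1_r (4 * alpha * (P / n0) * T ^ 2)).
    rewrite <- (is_series_unique _ _ is_series_inv_consecutive), <- Series_scal_l.
    apply Series_le.
    + intros j. now apply tail_I_term_bounds.
    + apply (@ex_series_scal_l R_AbsRing R_NormedModule).
      exists 1. exact is_series_inv_consecutive.
Qed.

Lemma ex_series_I_term T : 0 < T ->
  ex_series (fun j => I_term n0 alpha P omega T (S j)).
Proof. intros HT. apply ex_series_incr_1. now apply ex_series_tail_I_term. Qed.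

Lemma mutual_info_quadratic_error T : 0 < T ->
  Rabs (mutual_info n0 alpha P omega T - P / n0 * T)
    <= (P / n0 * (alpha + 4 * (P / n0)) / 2 + 4 * alpha * (P / n0)) * T ^ 2.
Proof.
  intros HT. unfold mutual_info.
  rewrite Series_incr_1 by now apply ex_series_I_term.
  destruct (first_I_term_bounds T HT) as [Hfirst_low Hfirst_up].
  destruct (Series_tail_I_term_bounds T HT) as [Htail_low Htail_up].
  assert (0 <= P / n0 * (alpha + 4 * (P / n0)) / 2 * T ^ 2).
  { assert (0 < P / n0) by (apply Rdiv_lt_0_compat; lra). nra. }
  apply Rabs_le. split; lra.
Qed.

End Eigenvalue_sums.

Theorem theorem3 (n0 alpha P : R) (omega : nat -> R -> R) :
  0 < n0 -> 0 < alpha -> 0 < P ->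
  omega_spec alpha omega ->
  (forall T : R, 0 < T -> ex_series (fun j => I_term n0 alpha P omega T (S j))) /\
  filterlim (fun T => (mutual_info n0 alpha P omega T - 0) / (T - 0))
    (at_right 0) (locally (P / n0)).
Proof.
  intros Hn0 Halpha HP Homega. split.
  - intros T HT. now apply ex_series_I_term.
  - apply filterlim_right_slope with
      (K := P / n0 * (alpha + 4 * (P / n0)) / 2 + 4 * alpha * (P / n0)).
    intros T HT. rewrite !Rminus_0_r.
    now apply mutual_info_quadratic_error.
Qed.
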